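(* The number of equilibria in $\Delta$ is finite.
   Context: Let $N\ge3$, $\alpha>1$, and $A_{i,j}=1-\delta_{i,j}$ for $i,j\le N$. Let $\Delta=\{v\in\mathbb R_+^N:\sum_iv_i=1,\ v_i\le3/4\ \forall i\}$. For $v\in\Delta$ let $v^\alpha=(v_i^\alpha)_i$, $H(v)=\sum_{i\neq j}v_i^\alpha v_j^\alpha$, $\pi_i(v)=v_i^\alpha(Av^\alpha)_i/H(v)$, and $F(v)=-v+\pi(v)$. An equilibrium is $v\in\Delta$ with $F(v)=0$. *)

From HB Require Import structures.
From mathcomp Require Import all_boot all_order all_algebra.
From mathcomp Require Import all_classical all_reals all_analysis.
Set Implicit Arguments. Unset Strict Implicit. Unset Printing Implicit Defensive.
Import Order.TTheory GRing.Theory Num.Theory.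
Local Open Scope ring_scope.

Section Defs.
Variables (R : realType) (N : nat) (alpha : R).

Definition in_Delta (v : 'I_N -> R) : Prop :=
  (forall i, 0 <= v i) /\ \sum_(i < N) v i = 1 /\ (forall i, v i <= 3 / 4).

Definition Amat (i j : 'I_N) : R := 1 - (i == j)%:R.

Definition vpow (v : 'I_N -> R) (i : 'I_N) : R := v i `^ alpha.

Definition Hf (v : 'I_N -> R) : R :=
  \sum_(i < N) \sum_(j < N | i != j) vpow v i * vpow v j.

Definition pif (v : 'I_N -> R) (i : 'I_N) : R :=
  vpow v i * (\sum_(j < N) Amat i j * vpow v j) / Hf v.

Definition Ff (v : 'I_N -> R) (i : 'I_N) : R := - v i + pif v i.

Definition equilibrium (v : 'I_N -> R) : Prop :=
  in_Delta v /\ (forall i, Ff v i = 0).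
End Defs.

From mathcomp Require Import all_boot all_order all_algebra.
From mathcomp Require Import all_classical all_reals all_analysis.
From mathcomp Require Import ring lra.
From mathcomp Require Import finmap.
Set Implicit Arguments. Unset Strict Implicit. Unset Printing Implicit Defensive.
Import Order.TTheory GRing.Theory Num.Theory.
Local Open Scope classical_set_scope.
Local Open Scope ring_scope.

(* In the coordinate u = ln v_i, the equilibrium equation at a positive
   coordinate reads S e^((alpha-1)u) - e^((2 alpha-1)u) = H, an exponential sum
   with three distinct exponents; by Rolle's theorem it has at most two real
   roots, so an equilibrium takes at most two positive values c, d.  If they
   are taken k and m times, then k c + m d = 1, and subtracting the equations at
   c and d shows that t = ln (c / d) is a root of a nonzero exponential sum
   depending only on k and m.  Hence c = e^t / (k e^t + m) ranges over a finite
   set, and so do the equilibria. *)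

Section ExponentialSums.
Variable R : realType.

Definition expsum (s : seq (R * R)) (t : R) : R := \sum_(p <- s) p.1 * expR (p.2 * t).

Lemma is_derive_scaled_expR (c l t : R) :
  is_derive t 1 (fun u => c * expR (l * u)) (c * l * expR (l * t)).
Proof.
have dlin : is_derive t 1 (fun u : R => l * u) l.
  have := @is_deriveZ R R R id l t 1 1 (is_derive_id _ _).
  by rewrite /GRing.scale /= mulr1.
have dexp : is_derive t 1 (expR \o (fun u : R => l * u)) (expR (l * t) * l).
  exact: is_derive1_comp.
have := @is_deriveZ R R R _ c t 1 _ dexp; rewrite /GRing.scale /= => dscaled.
have -> : (fun u => c * expR (l * u)) = c \*: (expR \o *%R l) by apply/funext.
by apply: is_derive_eq dscaled _; ring.
Qed.

Lemma is_derive_expsum (s : seq (R * R)) (t : R) :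
  is_derive t 1 (expsum s) (expsum [seq (p.1 * p.2, p.2) | p <- s] t).
Proof.
elim: s => [|p s IH].
  have -> : expsum [::] = cst 0 by apply/funext => u; rewrite /expsum big_nil.
  exact: is_derive_cst.
have -> : expsum (p :: s) = (fun u => p.1 * expR (p.2 * u)) + expsum s.
  by apply/funext => u; rewrite /expsum big_cons.
rewrite /expsum big_cons /=.
by apply: is_deriveD => //; apply: is_derive_scaled_expR.
Qed.

Lemma expsum_shift (c0 l0 : R) (s : seq (R * R)) (t : R) :
  expsum ((c0, 0) :: [seq (p.1, p.2 - l0) | p <- s]) t =
  expR (- (l0 * t)) * expsum ((c0, l0) :: s) t.
Proof.
rewrite /expsum !big_cons big_map /= mulrDr mulr_sumr; congr (_ + _).
  by rewrite mul0r expR0 mulr1 mulrCA -expRD addNr expR0 mulr1.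
by apply: eq_bigr => p _; rewrite mulrCA -expRD; congr (_ * expR _); ring.
Qed.

Lemma expsum_filter_coef (s : seq (R * R)) (t : R) :
  expsum [seq p <- s | p.1 != 0] t = expsum s t.
Proof.
rewrite /expsum big_filter big_mkcond; apply: eq_bigr => p _.
by case: ifP => // /negbFE /eqP ->; rewrite mul0r.
Qed.

End ExponentialSums.

Section ZeroCounting.
Variable R : realType.

(* Zeros are counted along strictly increasing sequences, the form in which
   Rolle's theorem applies. *)
Definition nzeros_le (f : R -> R) (n : nat) : Prop :=
  forall s : seq R, sorted <%R s -> all (fun x => f x == 0) s -> (size s <= n)%N.

Lemma nzeros_le_sub (f g : R -> R) (n m : nat) :
  (forall t, f t = 0 -> g t = 0) -> (n <= m)%N -> nzeros_le g n -> nzeros_le f m.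
Proof.
move=> fg nm zg s ss zs; apply: leq_trans nm; apply: zg ss _.
by apply: sub_all zs => t /eqP /fg ->.
Qed.

Lemma rolle_interlace (f df : R -> R) : (forall t : R, is_derive t 1 f (df t)) ->
  forall (s : seq R) (x : R), path <%R x s -> all (fun y => f y == 0) (x :: s) ->
  exists s' : seq R, [/\ size s' = size s, sorted <%R s',
    all (fun y => df y == 0) s' & all (fun c => x < c) s'].
Proof.
move=> fdf; elim=> [|y s IH] x; first by exists [::].
move=> /= /andP[xy ys] /and3P[/eqP fx /eqP fy fs].
have [s' [size_s' sorted_s' dfs' ys']] : exists s' : seq R,
    [/\ size s' = size s, sorted <%R s', all (fun y => df y == 0) s'
      & all (fun c => y < c) s'].
  by apply: IH ys _; rewrite /= fy eqxx fs.
have /(Rolle xy)[z _||c cxy dc] : f x = f y by rewrite fx fy.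
- by case: (fdf z).
- by apply: derivable_within_continuous => r _; case: (fdf r).
move: cxy; rewrite in_itv /= => /andP[xc cy].
have dfc : df c = 0 by case: (fdf c) => _ <-; case: dc.
exists (c :: s'); split => //=; first by rewrite size_s'.
- rewrite (path_sortedE lt_trans) sorted_s' andbT.
  by apply: sub_all ys' => z /= /(lt_trans cy).
- by rewrite dfc eqxx.
- by rewrite xc /=; apply: sub_all ys' => z /= /(lt_trans (lt_trans xc cy)).
Qed.

Lemma nzeros_le_deriv (f df : R -> R) (n : nat) : (forall t : R, is_derive t 1 f (df t)) ->
  nzeros_le df n -> nzeros_le f n.+1.
Proof.
move=> fdf zdf [|x s] //= sorted_xs zs.
have [s' [size_s' sorted_s' zs' _]] := rolle_interlace fdf sorted_xs zs.
by rewrite ltnS -size_s'; apply: zdf.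
Qed.

Lemma nzeros_le_uniq (f : R -> R) (n : nat) : nzeros_le f n ->
  forall s : seq R, uniq s -> all (fun x => f x == 0) s -> (size s <= n)%N.
Proof.
move=> zf s us zs; rewrite -(size_sort <=%R s); apply: zf; last by rewrite all_sort.
by rewrite lt_sorted_uniq_le sort_uniq us sort_sorted //; exact: le_total.
Qed.

Lemma nzeros_le_finite (f : R -> R) (n : nat) : nzeros_le f n ->
  finite_set [set t | f t = 0].
Proof.
move=> zf; apply: contrapT => /(infinite_set_fset n.+1)[B Bzeros Bsize].
have zB : all (fun x => f x == 0) B by apply/allP => x xB; apply/eqP; exact: Bzeros.
by have := nzeros_le_uniq zf (fset_uniq B) zB; rewrite leqNgt Bsize.
Qed.

(* Factoring out e^(l0 t) and differentiating kills the term (c0, l0) and keeps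
   the other coefficients nonzero, since the exponents are distinct. *)
Lemma expsum_nzeros_le (s : seq (R * R)) (n : nat) : size s = n.+1 ->
  all (fun p => p.1 != 0) s -> uniq [seq p.2 | p <- s] -> nzeros_le (expsum s) n.
Proof.
elim: n s => [|n IH] [|[c0 l0] s] //=.
  case: s => // _ /andP[c0n _] _ [|x s] // _ /andP[/eqP fx _].
  move: fx; rewrite /expsum big_cons big_nil addr0 /= => /eqP.
  by rewrite mulf_eq0 (negbTE c0n) expR_eq0.
move=> [size_s] /andP[c0n coefs_s] /andP[l0n uniq_s].
pose s1 := [seq (p.1, p.2 - l0) | p <- s].
have zs1' : nzeros_le (expsum [seq (p.1 * p.2, p.2) | p <- s1]) n.
  apply: IH; first by rewrite !size_map.
  - rewrite -map_comp all_map; apply/allP => p ps /=.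
    rewrite mulf_eq0 negb_or (allP coefs_s p ps) /= subr_eq0.
    by apply: contraNneq l0n => <-; apply: map_f.
  - rewrite -!map_comp (map_comp (fun x => x - l0)) map_inj_uniq //.
    exact: addIr.
have zshift' : nzeros_le (expsum [seq (p.1 * p.2, p.2) | p <- (c0, 0) :: s1]) n.
  by apply: nzeros_le_sub zs1' => // t; rewrite /expsum big_cons /= mulr0 mul0r add0r.
apply: nzeros_le_sub (nzeros_le_deriv (is_derive_expsum _) zshift') => // t ft.
by rewrite expsum_shift ft mulr0.
Qed.

Lemma expsum_nzeros_le_size (s : seq (R * R)) :
  uniq [seq p.2 | p <- s] -> has (fun p => p.1 != 0) s -> nzeros_le (expsum s) (size s).-1.
Proof.
move=> uniq_s; rewrite has_filter.
have size_le : (size [seq p <- s | p.1 != 0%R] <= size s)%N by rewrite size_filter count_size.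
have uniq_f : uniq [seq p.2 | p <- [seq p <- s | p.1 != 0]].
  exact/(subseq_uniq _ uniq_s)/map_subseq/filter_subseq.
have coefs_f : all (fun p : R * R => p.1 != 0) [seq p <- s | p.1 != 0] :=
  filter_all _ _.
move: size_le uniq_f coefs_f (expsum_filter_coef s).
case: [seq p <- s | p.1 != 0] => // p s' size_le uniq_f coefs_f sf _.
apply: nzeros_le_sub (expsum_nzeros_le (erefl (size (p :: s'))) coefs_f uniq_f).
  by move=> t; rewrite sf.
by rewrite -ltnS prednK // (leq_trans _ size_le).
Qed.

End ZeroCounting.

Lemma sumr_by_values (I : finType) (T : eqType) (V : nmodType) (x : I -> T)
    (phi : T -> V) (s : seq T) : uniq s -> (forall i, x i \notin s -> phi (x i) = 0) ->
  \sum_i phi (x i) = \sum_(c <- s) phi c *+ #|[pred i | x i == c]|.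
Proof.
move=> uniq_s phi0.
transitivity (\sum_i \sum_(c <- s | x i == c) phi c).
  apply: eq_bigr => i _; rewrite -big_filter.
  have [xs|xns] := boolP (x i \in s).
    by rewrite (eq_filter (a2 := pred1 (x i))) ?filter_pred1_uniq ?big_seq1 // => c; rewrite eq_sym.
  rewrite phi0 // big1_seq // => c /andP[_]; rewrite mem_filter => /andP[/eqP xc cs].
  by rewrite xc cs in xns.
rewrite (exchange_big_dep predT) //=; apply: eq_bigr => c _.
by rewrite -sumr_const; apply: eq_bigl.
Qed.

Lemma finite_set_fun (I : finType) (T : choiceType) (F : set T) : finite_set F ->
  finite_set [set v : I -> T | forall i, F (v i)].
Proof.
move=> /finite_fsetP[X ->].
apply: (@sub_finite_set _ _ ((fun f : {ffun I -> X} => fun i => val (f i)) @` setT));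
  last exact: finite_image.
move=> v /= vX; exists [ffun i => [` (vX i : v i \in X)]%fset] => //.
by apply/funext => i; rewrite ffunE.
Qed.

Section Equilibria.
Variables (R : realType) (N : nat) (alpha : R).
Hypothesis alpha_gt1 : 1 < alpha.

Definition powsum (v : 'I_N -> R) : R := \sum_(j < N) vpow alpha v j.

Lemma sum_Amat_mul (x : 'I_N -> R) (i : 'I_N) :
  \sum_(j < N) Amat R i j * x j = \sum_(j < N) x j - x i.
Proof.
rewrite /Amat; under eq_bigr do rewrite mulrBl mul1r.
rewrite sumrB; congr (_ - _); rewrite (bigD1 i) //= eqxx mul1r big1 ?addr0 // => j ji.
by rewrite eq_sym (negbTE ji) mul0r.
Qed.

Lemma equilibrium_log_coord (v : 'I_N -> R) (i : 'I_N) : equilibrium alpha v -> 0 < v i ->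
  powsum v * expR ((alpha - 1) * ln (v i)) - expR ((2 * alpha - 1) * ln (v i)) = Hf alpha v.
Proof.
move=> [_ eqF] vi_gt0; have := eqF i; rewrite /Ff /pif sum_Amat_mul -/(powsum v).
set H := Hf alpha v; set x := vpow alpha v i.
move=> /eqP; rewrite addrC subr_eq0 => /eqP vi_eq.
have H_neq0 : H != 0.
  by apply: contraTneq vi_gt0 => H0; rewrite -vi_eq H0 invr0 mulr0 ltxx.
have {vi_eq} viH : v i * H = x * (powsum v - x) by rewrite -vi_eq divfK.
have x_exp : x = expR (alpha * ln (v i)) by rewrite /x /vpow /powR (gt_eqF vi_gt0).
have vi_exp : v i = expR (ln (v i)) by rewrite lnK // posrE.
set u := ln (v i) in x_exp vi_exp *.
have E1 : expR u * expR ((alpha - 1) * u) = x by rewrite x_exp -expRD; congr expR; ring.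
have E2 : expR u * expR ((2 * alpha - 1) * u) = x * x.
  by rewrite x_exp -!expRD; congr expR; ring.
apply: (mulfI (lt0r_neq0 (expR_gt0 u))).
transitivity (powsum v * x - x * x); first by rewrite mulrBr mulrCA E1 E2.
by rewrite -vi_exp viH; ring.
Qed.

Lemma equilibrium_no_three_levels (v : 'I_N -> R) (i j l : 'I_N) : equilibrium alpha v ->
  0 < v i -> 0 < v j -> 0 < v l -> v i != v j -> v i != v l -> v j != v l -> False.
Proof.
move=> eqv vi_gt0 vj_gt0 vl_gt0 vij vil vjl.
pose s := [:: (powsum v, alpha - 1); (-1, 2 * alpha - 1); (- Hf alpha v, 0)].
have root_s k : 0 < v k -> expsum s (ln (v k)) = 0.
  move=> vk_gt0; rewrite /expsum !big_cons big_nil /= mul0r expR0.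
  by rewrite -(equilibrium_log_coord eqv vk_gt0); ring.
have zs : nzeros_le (expsum s) (size s).-1.
  apply: expsum_nzeros_le_size; last by rewrite /= oppr_eq0 oner_eq0 orbT.
  rewrite /= !inE !negb_or !andbT.
  by repeat (apply/andP; split); apply/eqP => e; have := alpha_gt1; lra.
have := nzeros_le_uniq zs (s := [:: ln (v i); ln (v j); ln (v l)]).
rewrite /= !inE !negb_or !(inj_in_eq (@ln_inj R)) ?posrE // vij vil vjl.
by rewrite !root_s // eqxx => /(_ isT isT).
Qed.

Lemma equilibrium_support_sums (v : 'I_N -> R) (s : seq R) : equilibrium alpha v ->
  uniq s -> (forall l, v l \notin s -> v l = 0) ->
  \sum_(c <- s) c *+ #|[pred l | v l == c]| = 1 /\
  powsum v = \sum_(c <- s) c `^ alpha *+ #|[pred l | v l == c]|.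
Proof.
move=> [[_ [sum_v1 _]] _] uniq_s supp_s; split.
  by rewrite -sum_v1; symmetry; exact: (sumr_by_values (phi := id) uniq_s supp_s).
apply: (sumr_by_values (phi := fun y => y `^ alpha) uniq_s) => l /supp_s ->.
by rewrite powR0 // lt0r_neq0 // (lt_trans ltr01).
Qed.

(* If an equilibrium takes the positive values c, d exactly k and m times, then
   t = ln (c / d) is a root of [level_expsum k m] and c = level k m t. *)
Definition level_expsum (k m : nat) : seq (R * R) :=
  [:: (k%:R - 1, 2 * alpha - 1); (- k%:R, alpha); (m%:R, alpha - 1); (1 - m%:R, 0)].

Definition level (k m : nat) (t : R) : R := expR t / (k%:R * expR t + m%:R).

Definition levels : set R := [set 0] `|` \bigcup_(k in `I_N.+1) \bigcup_(m in `I_N.+1)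
  level k m @` [set t | expsum (level_expsum k m) t = 0].

Lemma levels_finite : finite_set levels.
Proof.
rewrite finite_setU; split; first exact: finite_set1.
apply: bigcup_finite => // k _; apply: bigcup_finite => // m _.
apply/finite_image/(@nzeros_le_finite _ _ (size (level_expsum k m)).-1).
apply: expsum_nzeros_le_size.
  rewrite /= !inE !negb_or !andbT.
  by repeat (apply/andP; split); apply/eqP => e; have := alpha_gt1; lra.
by case: k => [|k] /=; rewrite ?sub0r oppr_eq0 ?oner_eq0 ?pnatr_eq0 ?orbT.
Qed.

Lemma level_expsum_root (k m : nat) (S u w : R) :
  S = k%:R * expR (alpha * u) + m%:R * expR (alpha * w) ->
  S * expR ((alpha - 1) * u) - expR ((2 * alpha - 1) * u) =
    S * expR ((alpha - 1) * w) - expR ((2 * alpha - 1) * w) ->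
  expsum (level_expsum k m) (u - w) = 0.
Proof.
move=> -> /eqP; rewrite -subr_eq0 => /eqP eq_uw.
apply: (mulfI (lt0r_neq0 (expR_gt0 ((2 * alpha - 1) * w)))); rewrite mulr0 -eq_uw.
move: (u - w) (subrK w u) => t <-.
have expR_split y : expR ((2 * alpha - 1) * y) = expR (alpha * y) * expR ((alpha - 1) * y).
  by rewrite -expRD; congr expR; ring.
rewrite /expsum !big_cons big_nil /= mul0r expR0 !mulrDr !expRD !expR_split; ring.
Qed.

Lemma level_ln_ratio (k m : nat) (c d : R) : 0 < c -> 0 < d ->
  k%:R * c + m%:R * d = 1 -> level k m (ln c - ln d) = c.
Proof.
move=> c_gt0 d_gt0 kcmd; rewrite /level expRB !lnK ?posrE //.
have -> : k%:R * (c / d) + m%:R = (k%:R * c + m%:R * d) / d.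
  by field; exact: lt0r_neq0.
by rewrite kcmd div1r invrK divfK // lt0r_neq0.
Qed.

Lemma equilibrium_levels_mem (v : 'I_N -> R) (i j : 'I_N) (k m : nat) :
  equilibrium alpha v -> 0 < v i -> 0 < v j -> (k <= N)%N -> (m <= N)%N ->
  powsum v = v i `^ alpha *+ k + v j `^ alpha *+ m ->
  v i *+ k + v j *+ m = 1 -> levels (v i).
Proof.
move=> eqv vi_gt0 vj_gt0 kN mN powsum_v sum_v; right.
exists k; first by rewrite /= ltnS.
exists m; first by rewrite /= ltnS.
exists (ln (v i) - ln (v j)).
  apply: (level_expsum_root (S := powsum v)).
    by rewrite powsum_v /powR (gt_eqF vi_gt0) (gt_eqF vj_gt0) !mulr_natl.
  by rewrite !(equilibrium_log_coord eqv).
by apply: level_ln_ratio; rewrite // !mulr_natl.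
Qed.

Lemma equilibrium_coord_levels (v : 'I_N -> R) (i : 'I_N) :
  equilibrium alpha v -> levels (v i).
Proof.
move=> eqv; have [v_ge0 _] := eqv.1.
have pos_of_neq0 l : v l != 0 -> 0 < v l by move=> vl; rewrite lt_def vl v_ge0.
have [->|/pos_of_neq0 vi_gt0] := eqVneq (v i) 0; first by left.
have count_le (c : R) : (#|[pred l | v l == c]| <= N)%N.
  exact: leq_trans (max_card _) (eq_leq (card_ord N)).
have [[j [vj_gt0 vji]]|one_level] := pselect (exists j, 0 < v j /\ v j != v i).
  have supp l : v l \notin [:: v i; v j] -> v l = 0.
    rewrite !inE negb_or => /andP[vli vlj]; apply/eqP/contraT => /pos_of_neq0 vl_gt0.
    by case: (equilibrium_no_three_levels eqv vi_gt0 vj_gt0 vl_gt0); rewrite // eq_sym.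
  have uniq_ij : uniq [:: v i; v j] by rewrite /= inE eq_sym vji.
  have [] := equilibrium_support_sums eqv uniq_ij supp.
  rewrite !big_cons !big_nil !addr0 => sum_v powsum_v.
  exact: equilibrium_levels_mem eqv vi_gt0 vj_gt0 (count_le _) (count_le _) powsum_v sum_v.
have supp l : v l \notin [:: v i] -> v l = 0.
  rewrite inE => vli; apply/eqP/contraT => /pos_of_neq0 vl_gt0.
  by case: one_level; exists l.
have [] := equilibrium_support_sums eqv _ supp => //.
rewrite !big_seq1 => sum_v powsum_v.
apply: (equilibrium_levels_mem eqv vi_gt0 vi_gt0 (leq0n N) (count_le (v i)));
  by rewrite ?powsum_v mulr0n add0r.
Qed.

End Equilibria.

Theorem lemma4p6 (R : realType) (N : nat) (alpha : R) :
  (3 <= N)%N -> 1 < alpha ->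
  finite_set [set v : 'I_N -> R | @equilibrium R N alpha v].
Proof.
move=> _ alpha_gt1.
apply: sub_finite_set (finite_set_fun 'I_N (levels_finite N alpha_gt1)).
by move=> v eqv i; apply: equilibrium_coord_levels.
Qed.
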